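(* Let $K$ be a non-pluripolar compact subset of $\mathbb{C}^n$. Then for every index $i\ge 0$, $$\inf\{\|P\|_K : P\in\mathcal P(\alpha(i))\} \;\ge\; [\tau^{-}(K)]^{|\alpha(i)|}.$$ In particular, every unweighted Chebyshev polynomial $T$ for $K$ in $\mathcal P(\alpha(i))$, i.e. every minimizer of $\|P\|_K$ over $P\in\mathcal P(\alpha(i))$, satisfies $\|T\|_K\ge[\tau^{-}(K)]^{|\alpha(i)|}$.
   Context: Monomials $z^\alpha=z_1^{\alpha_1}\cdots z_n^{\alpha_n}$, $\alpha\in\mathbb N_0^n$, are enumerated as $e_0=1,e_1,e_2,\dots$ with $e_i=z^{\alpha(i)}$. The enumeration is such that $|\alpha(i)|=\alpha_1+\dots+\alpha_n$ is non-decreasing in $i$. Among multi-indices of equal length it is ordered lexicographically: for $|\alpha|=|\beta|$, $\beta\prec\alpha$ iff for some $l$ one has $\alpha_l<\beta_l$ and $\alpha_k=\beta_k$ for all $k<l$. $\mathcal P(\alpha(i))$ denotes the set of polynomials of the form $e_i+\sum_{j<i}c_je_j$ with $c_j\in\mathbb C$. For compact $K\subset\mathbb C^n$, $\|\cdot\|_K$ denotes the sup norm on $K$. Set $t_i(K)=\inf\{\|P\|_K:P\in\mathcal P(\alpha(i))\}$ and $\tau^-(K)=\liminf_{i\to\infty} t_i(K)^{1/|\alpha(i)|}$. A compact set is non-pluripolar if it is not contained in the $-\infty$ locus of a plurisubharmonic function that is not identically $-\infty$ on a connected open neighborhood. *)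

From HB Require Import structures.
From mathcomp Require Import all_boot all_order all_algebra.
From mathcomp Require Import all_classical all_reals all_analysis.
From mathcomp Require Import complex.

Set Implicit Arguments.
Unset Strict Implicit.
Unset Printing Implicit Defensive.

Import Order.TTheory GRing.Theory Num.Theory.
Import numFieldNormedType.Exports.
Local Open Scope classical_set_scope.
Local Open Scope ring_scope.

(* C^n is modelled as 'I_n -> R * R (real and imaginary parts of each
   coordinate), with the product topology (= Euclidean topology of R^{2n}). *)
Notation Cn R n := ({ptws 'I_n -> (R * R)%type}) (only parsing).

Section Defs.
Variables (R : realType) (n : nat).
Local Notation C := (R[i]).

Definition toC (p : R * R) : C := Complex p.1 p.2.
Definition ofC (w : C) : R * R := (complex.Re w, complex.Im w).

Definition cmod (w : C) : R := Num.sqrt (complex.Re w ^+ 2 + complex.Im w ^+ 2).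

Definition expi (t : R) : C := Complex (cos t) (sin t).

Definition mindex := 'I_n -> nat.
Definition mdeg (a : mindex) : nat := (\sum_(k < n) a k)%N.

(* the order on multi-indices used for the enumeration:
   beta comes strictly before alpha *)
Definition glex_lt (b a : mindex) : Prop :=
  (mdeg b < mdeg a)%N \/
  (mdeg b = mdeg a /\
   exists l : 'I_n, (a l < b l)%N /\ forall k : 'I_n, (k < l)%N -> a k = b k).

Definition glex_enum (alpha : nat -> mindex) : Prop :=
  bijective alpha /\ forall i j : nat, (i < j)%N -> glex_lt (alpha i) (alpha j).

Definition monomial (a : mindex) (z : Cn R n) : C :=
  \prod_(k < n) toC (z k) ^+ a k.

Definition Ppoly (alpha : nat -> mindex) (i : nat) (c : nat -> C) (z : Cn R n) : C :=
  monomial (alpha i) z + \sum_(j < i) c j * monomial (alpha j) z.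

Definition supnorm (K : set (Cn R n)) (f : Cn R n -> C) : R :=
  sup [set cmod (f z) | z in K].

Definition tcheb (K : set (Cn R n)) (alpha : nat -> mindex) (i : nat) : R :=
  inf [set supnorm K (Ppoly alpha i c) | c in [set: nat -> C]].

Definition tau_minus (K : set (Cn R n)) (alpha : nat -> mindex) : R :=
  limn_inf (fun i => tcheb K alpha i `^ ((mdeg (alpha i))%:R^-1)).

Definition cline (a b : Cn R n) (zeta : C) : Cn R n :=
  fun k => ofC (toC (a k) + zeta * toC (b k)).

Definition psh (Omega : set (Cn R n)) (u : Cn R n -> \bar R) : Prop :=
  [/\ (forall z, Omega z -> (u z < +oo)%E),
      (forall a, Omega a -> forall c : R, (u a < c%:E)%E ->
          \forall z \near a, (u z < c%:E)%E) &
      (forall a b : Cn R n,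
          (forall zeta : C, cmod zeta <= 1 -> Omega (cline a b zeta)) ->
          (u a <= ((2 * pi)^-1)%:E *
                  \int[@lebesgue_measure R]_(t in `[0%R, (2 * pi)%R]) u (cline a b (expi t)))%E)].

Definition pluripolar (K : set (Cn R n)) : Prop :=
  exists (Omega : set (Cn R n)) (u : Cn R n -> \bar R),
    [/\ open Omega, connected Omega, K `<=` Omega & psh Omega u] /\
    (exists2 z, Omega z & u z != -oo%E) /\
    (forall z, K z -> u z = -oo%E).

End Defs.

From HB Require Import structures.
From mathcomp Require Import all_boot all_order all_algebra.
From mathcomp Require Import all_classical all_reals all_analysis.
From mathcomp Require Import complex.
From mathcomp Require Import ring lra.
Import Order.TTheory GRing.Theory Num.Theory.
Import numFieldNormedType.Exports.

Set Implicit Arguments.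
Unset Strict Implicit.
Unset Printing Implicit Defensive.

Local Open Scope classical_set_scope.
Local Open Scope ring_scope.

(* The graded lexicographic order is compatible with addition of multi-indices,
   so if P = z^a + (lower terms) then P^k = z^(k a) + (lower terms); with
   k a = alpha(j) this puts P^k in P(alpha(j)), whence t_j <= |P|_K^k and
   t_j^(1/|alpha(j)|) <= |P|_K^(1/|alpha(i)|).  Such j exist with |alpha(j)|
   arbitrarily large, so the liminf tau^-(K) is at most |P|_K^(1/|alpha(i)|).
   Non-pluripolarity only serves to make K nonempty, so that sup norms are
   nonnegative and the sup of the constant 1 is 1. *)

Section MultiIndex.
Variable n : nat.
Local Notation mi := (mindex n).

Definition madd (a b : mi) : mi := fun k => (a k + b k)%N.
Definition mscale (m : nat) (a : mi) : mi := fun k => (m * a k)%N.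

Lemma maddC (a b : mi) : madd a b = madd b a.
Proof. by apply: funext => k; rewrite /madd addnC. Qed.

Lemma mscaleS m (a : mi) : mscale m.+1 a = madd (mscale m a) a.
Proof. by apply: funext => k; rewrite /madd /mscale mulSnr. Qed.

Lemma mdegD (a b : mi) : mdeg (madd a b) = (mdeg a + mdeg b)%N.
Proof. by rewrite /mdeg /madd big_split. Qed.

Lemma mdeg_mscale m (a : mi) : mdeg (mscale m a) = (m * mdeg a)%N.
Proof. by rewrite /mdeg /mscale big_distrr. Qed.

Lemma leq_coord_mdeg (a : mi) k : (a k <= mdeg a)%N.
Proof. by rewrite /mdeg (bigD1 k) //= leq_addr. Qed.

Lemma glex_ltnn (a : mi) : ~ glex_lt a a.
Proof. by case=> [|[_ [l []]]]; rewrite ltnn. Qed.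

Lemma glex_lt_mdeg (a b : mi) : glex_lt a b -> (mdeg a <= mdeg b)%N.
Proof. by case=> [/ltnW|[-> _]]. Qed.

Lemma glex_lt_trans (b a c : mi) : glex_lt a b -> glex_lt b c -> glex_lt a c.
Proof.
case=> [d1|[e1 [l [l1 a1]]]] [d2|[e2 [l' [l2 a2]]]].
- by left; apply: ltn_trans d2.
- by left; rewrite -e2.
- by left; rewrite e1.
right; split; first by rewrite e1.
case: (ltngtP l l') => hl.
- exists l; split; first by rewrite a2.
  by move=> k hk; rewrite a2 ?a1 //; apply: ltn_trans hl.
- exists l'; split; first by rewrite -a1.
  by move=> k hk; rewrite a2 ?a1 //; apply: ltn_trans hl.
- have ll' : l = l' by apply: val_inj.
  subst l'; exists l; split; first exact: ltn_trans l1.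
  by move=> k hk; rewrite a2 ?a1.
Qed.

Lemma glex_lt_add2r (c a b : mi) : glex_lt a b -> glex_lt (madd a c) (madd b c).
Proof.
case=> [d|[e [l [l1 a1]]]].
  by left; rewrite !mdegD ltn_add2r.
right; split; first by rewrite !mdegD e.
exists l; split; first by rewrite /madd ltn_add2r.
by move=> k hk; rewrite /madd a1.
Qed.

Section Enumeration.
Variables (alpha : nat -> mi) (alpha_enum : glex_enum alpha).

Lemma glex_enum_surj (a : mi) : exists j, alpha j = a.
Proof. by have [[ainv _ alphaK] _] := alpha_enum; exists (ainv a). Qed.

Lemma glex_enum_lt j m : glex_lt (alpha j) (alpha m) -> (j < m)%N.
Proof.
have [_ incr] := alpha_enum; move=> ljm; case: (ltngtP j m) => // [mj|jm].
  by case: (glex_ltnn (glex_lt_trans ljm (incr _ _ mj))).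
by subst; case: (glex_ltnn ljm).
Qed.

Lemma glex_enum_mdeg0 i : mdeg (alpha i) = 0%N -> i = 0%N.
Proof.
have [_ incr] := alpha_enum; case: i => // i deg0.
have [|[e [l [ll _]]]] := incr 0%N i.+1 isT; first by rewrite deg0.
have := leq_coord_mdeg (alpha i.+1) l; rewrite deg0 leqn0 => /eqP a0.
have := leq_coord_mdeg (alpha 0%N) l; rewrite e deg0 leqn0 => /eqP b0.
by rewrite a0 b0 in ll.
Qed.

End Enumeration.
End MultiIndex.

Section Polynomials.
Variables (R : realType) (n : nat).
Local Notation C := (R[i]).
Local Notation CN := ({ptws 'I_n -> (R * R)%type}).
Local Notation mi := (mindex n).

Lemma monomialD (a b : mi) (z : CN) :
  monomial (madd a b) z = monomial a z * monomial b z.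
Proof. by rewrite /monomial -big_split; apply: eq_bigr => k _; rewrite exprD. Qed.

Inductive lower_poly (b : mi) : (CN -> C) -> Prop :=
| lower_poly0 : lower_poly b (fun _ => 0)
| lower_polyS a c f : glex_lt a b -> lower_poly b f ->
    lower_poly b (fun z => c * monomial a z + f z).
Arguments lower_poly0 {b}.
Arguments lower_polyS {b a} c {f}.

Lemma lower_poly_ext (b : mi) f g :
  lower_poly b f -> (forall z, f z = g z) -> lower_poly b g.
Proof. by move=> lf fg; have -> : g = f by apply: funext => z; rewrite fg. Qed.

Lemma lower_polyD (b : mi) f g :
  lower_poly b f -> lower_poly b g -> lower_poly b (fun z => f z + g z).
Proof.
move=> lf lg; elim: lf => [|a c f' ab _ IH].
  by apply: lower_poly_ext lg _ => z; rewrite add0r.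
by apply: lower_poly_ext (lower_polyS c ab IH) _ => z; rewrite addrA.
Qed.

Lemma lower_polyZ (b : mi) d f : lower_poly b f -> lower_poly b (fun z => d * f z).
Proof.
elim=> [|a c f' ab _ IH].
  by apply: lower_poly_ext lower_poly0 _ => z; rewrite mulr0.
by apply: lower_poly_ext (lower_polyS (d * c) ab IH) _ => z; rewrite mulrDr mulrA.
Qed.

Lemma lower_poly_trans (b b' : mi) f :
  lower_poly b f -> glex_lt b b' -> lower_poly b' f.
Proof.
move=> lf bb'; elim: lf => [|a c f' ab _ IH]; first exact: lower_poly0.
by apply: lower_polyS IH; exact: glex_lt_trans ab bb'.
Qed.

Lemma lower_poly_mulmonomial (b g : mi) f :
  lower_poly b f -> lower_poly (madd b g) (fun z => monomial g z * f z).
Proof.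
elim=> [|a c f' ab _ IH].
  by apply: lower_poly_ext lower_poly0 _ => z; rewrite mulr0.
apply: lower_poly_ext (lower_polyS c (glex_lt_add2r g ab) IH) _ => z.
by rewrite monomialD; ring.
Qed.

Lemma lower_polyM (b g : mi) f h :
  lower_poly b f -> lower_poly g h -> lower_poly (madd b g) (fun z => f z * h z).
Proof.
move=> lf lh; elim: lf => [|a c f' ab _ IH].
  by apply: lower_poly_ext lower_poly0 _ => z; rewrite mul0r.
have agbg : glex_lt (madd g a) (madd b g) by rewrite maddC; exact: glex_lt_add2r.
have lah := lower_poly_trans (lower_poly_mulmonomial a lh) agbg.
apply: lower_poly_ext (lower_polyD (lower_polyZ c lah) IH) _ => z.
by rewrite mulrDl mulrA.
Qed.

Definition glex_monic (b : mi) (f : CN -> C) :=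
  exists2 g, lower_poly b g & f = (fun z => monomial b z + g z).

Lemma glex_monicM (b g : mi) f h :
  glex_monic b f -> glex_monic g h -> glex_monic (madd b g) (fun z => f z * h z).
Proof.
move=> [F lF ->] [H lH ->].
have lbH := lower_poly_mulmonomial b lH; rewrite maddC in lbH.
exists (fun z => monomial b z * H z + (monomial g z * F z + F z * H z)).
  exact: lower_polyD lbH (lower_polyD (lower_poly_mulmonomial g lF) (lower_polyM lF lH)).
by apply: funext => z; rewrite monomialD; ring.
Qed.

Lemma glex_monicX (b : mi) f m :
  glex_monic b f -> glex_monic (mscale m b) (fun z => f z ^+ m).
Proof.
move=> fb; elim: m => [|m IH].
  exists (fun _ => 0); first exact: lower_poly0.
  by apply: funext => z; rewrite expr0 addr0 /monomial big1 //.
have -> : (fun z => f z ^+ m.+1) = (fun z => f z ^+ m * f z).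
  by apply: funext => z; rewrite exprSr.
by rewrite mscaleS; exact: glex_monicM.
Qed.

Section Enumeration.
Variables (alpha : nat -> mi) (alpha_enum : glex_enum alpha).

Lemma Ppoly_glex_monic i c : glex_monic (alpha i) (Ppoly alpha i c).
Proof.
have [_ incr] := alpha_enum.
exists (fun z => \sum_(j < i) c j * monomial (alpha j) z) => //.
have lower m : (m <= i)%N ->
    lower_poly (alpha i) (fun z => \sum_(j < m) c j * monomial (alpha j) z).
  elim: m => [|m IH] lt_mi.
    by apply: lower_poly_ext lower_poly0 _ => z; rewrite big_ord0.
  apply: lower_poly_ext (lower_polyS (c m) (incr _ _ lt_mi) (IH (ltnW lt_mi))) _ => z.
  by rewrite big_ord_recr /= addrC.
exact: lower.
Qed.

Lemma lower_poly_sum m g : lower_poly (alpha m) g ->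
  exists c : nat -> C, g = fun z => \sum_(j < m) c j * monomial (alpha j) z.
Proof.
elim=> [|a c0 f am _ [c ->]].
  by exists (fun _ => 0); apply: funext => z; rewrite big1 // => j _; rewrite mul0r.
have [j aj] := glex_enum_surj alpha_enum a; subst a.
have jm : (j < m)%N by apply: (glex_enum_lt alpha_enum).
exists (fun t => c t + (if t == j then c0 else 0)); apply: funext => z.
under [RHS]eq_bigr do rewrite mulrDl.
rewrite big_split /= [RHS]addrC; congr (_ + _).
under [RHS]eq_bigr => t _ do rewrite (fun_if (fun x => x * _)) mul0r.
by rewrite -big_mkcond (big_ord1_eq _ (fun k => c0 * monomial (alpha k) z)) jm.
Qed.

Lemma glex_monic_Ppoly m f : glex_monic (alpha m) f -> exists c, f = Ppoly alpha m c.
Proof. by move=> [g /lower_poly_sum [c ->] ->]; exists c. Qed.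

Lemma Ppoly_expn i j k (c : nat -> C) : alpha j = mscale k (alpha i) ->
  exists c', (fun z => Ppoly alpha i c z ^+ k) = Ppoly alpha j c'.
Proof.
move=> ajk; apply: glex_monic_Ppoly; rewrite ajk.
exact: glex_monicX (Ppoly_glex_monic i c).
Qed.

End Enumeration.
End Polynomials.

Section Modulus.
Variable R : realType.
Local Notation C := (R[i]).

Lemma cmodE (w : C) : cmod w = Normc.normc w.
Proof. by case: w. Qed.

Lemma cmod_ge0 (w : C) : 0 <= cmod w.
Proof. exact: sqrtr_ge0. Qed.

Lemma cmod1 : cmod (1 : C) = 1.
Proof. by rewrite cmodE Normc.normc1. Qed.

Lemma cmodM (w1 w2 : C) : cmod (w1 * w2) = cmod w1 * cmod w2.
Proof. by rewrite !cmodE Normc.normcM. Qed.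

Lemma cmodD (w1 w2 : C) : cmod (w1 + w2) <= cmod w1 + cmod w2.
Proof. by rewrite !cmodE; exact: le_normcD. Qed.

Lemma cmodX (w : C) k : cmod (w ^+ k) = cmod w ^+ k.
Proof. by elim: k => [|k IH]; rewrite ?cmod1 // !exprS cmodM IH. Qed.

Lemma cmod_toC_le (p : R * R) : cmod (toC p) <= `|p.1| + `|p.2|.
Proof.
have sum_ge0 : 0 <= `|p.1| + `|p.2| by rewrite addr_ge0.
rewrite /cmod /toC /= -[X in _ <= X]ger0_norm // -sqrtr_sqr ler_sqrt ?sqr_ge0 //.
rewrite sqrrD !real_normK ?num_real //.
have : 0 <= `|p.1| * `|p.2| by rewrite mulr_ge0.
lra.
Qed.

End Modulus.

Section SupNorm.
Variables (R : realType) (n : nat).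
Local Notation C := (R[i]).
Local Notation CN := ({ptws 'I_n -> (R * R)%type}).
Implicit Types (K : set CN) (f g : CN -> C).

Definition bounded_on K f := exists M, forall z, K z -> cmod (f z) <= M.

Lemma bounded_on_cst K (c : C) : bounded_on K (fun _ => c).
Proof. by exists (cmod c). Qed.

Lemma bounded_onD K f g :
  bounded_on K f -> bounded_on K g -> bounded_on K (fun z => f z + g z).
Proof.
move=> [M fM] [N gN]; exists (M + N) => z Kz.
exact: le_trans (cmodD _ _) (lerD (fM _ Kz) (gN _ Kz)).
Qed.

Lemma bounded_onM K f g :
  bounded_on K f -> bounded_on K g -> bounded_on K (fun z => f z * g z).
Proof.
move=> [M fM] [N gN]; exists (M * N) => z Kz.
by rewrite cmodM ler_pM ?cmod_ge0 ?fM ?gN.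
Qed.

Lemma bounded_onX K f k : bounded_on K f -> bounded_on K (fun z => f z ^+ k).
Proof.
move=> bf; elim: k => [|k IH]; first exact: bounded_on_cst.
under eq_fun do rewrite exprSr.
exact: bounded_onM.
Qed.

Lemma bounded_on_sum K m (F : nat -> CN -> C) : (forall j, bounded_on K (F j)) ->
  bounded_on K (fun z => \sum_(j < m) F j z).
Proof.
move=> bF; elim: m => [|m IH].
  by under eq_fun do rewrite big_ord0; exact: bounded_on_cst.
by under eq_fun do rewrite big_ord_recr; exact: bounded_onD.
Qed.

Lemma bounded_on_prod K m (F : 'I_m -> CN -> C) : (forall j, bounded_on K (F j)) ->
  bounded_on K (fun z => \prod_(j < m) F j z).
Proof.
elim: m F => [|m IH] F bF.
  by under eq_fun do rewrite big_ord0; exact: bounded_on_cst.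
by under eq_fun do rewrite big_ord_recr; apply: bounded_onM => //; exact: IH.
Qed.

Lemma compact_continuous_bounded K (g : CN -> R) : compact K -> continuous g ->
  exists M, forall z, K z -> `|g z| <= M.
Proof.
move=> cK cg.
have cgK : compact (g @` K) by apply: continuous_compact => //; exact: continuous_subspaceT.
have [M [_ gM]] := compact_bounded cgK.
by exists (`|M| + 1) => z Kz; apply: gM; [rewrite ltr_pwDr ?ler_norm|exists z].
Qed.

Lemma bounded_on_coord K k : compact K -> bounded_on K (fun z => toC (z k)).
Proof.
move=> cK.
have re_cont : continuous (fun z : CN => (z k).1).
  by move=> z; apply: (@continuous_comp _ _ _ (fun z : CN => z k) fst);
    [exact: proj_continuous|exact: cvg_fst].
have im_cont : continuous (fun z : CN => (z k).2).
  by move=> z; apply: (@continuous_comp _ _ _ (fun z : CN => z k) snd);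
    [exact: proj_continuous|exact: cvg_snd].
have [M1 M1b] := compact_continuous_bounded cK re_cont.
have [M2 M2b] := compact_continuous_bounded cK im_cont.
exists (M1 + M2) => z Kz.
exact: le_trans (cmod_toC_le _) (lerD (M1b _ Kz) (M2b _ Kz)).
Qed.

Lemma bounded_on_Ppoly K (alpha : nat -> mindex n) i c :
  compact K -> bounded_on K (Ppoly alpha i c).
Proof.
move=> cK.
have bmon a : bounded_on K (monomial a).
  by apply: bounded_on_prod => k; apply: bounded_onX; exact: bounded_on_coord.
apply: bounded_onD => //.
apply: (@bounded_on_sum K i (fun j z => c j * monomial (alpha j) z)) => j.
exact: bounded_onM (bounded_on_cst _ _) (bmon _).
Qed.

Lemma cmod_le_supnorm K f z : bounded_on K f -> K z -> cmod (f z) <= supnorm K f.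
Proof. by move=> [M fM] Kz; apply: ub_le_sup; [exists M => _ [w Kw <-]; exact: fM|exists z]. Qed.

Lemma supnorm_le K f M : K !=set0 -> (forall z, K z -> cmod (f z) <= M) ->
  supnorm K f <= M.
Proof. by move=> [z Kz] fM; apply: ge_sup; [exists (cmod (f z)), z|move=> _ [w Kw <-]; exact: fM]. Qed.

Lemma supnorm_ge0 K f : K !=set0 -> bounded_on K f -> 0 <= supnorm K f.
Proof. by move=> [z Kz] bf; exact: le_trans (cmod_ge0 _) (cmod_le_supnorm bf Kz). Qed.

Variables (K : set CN) (alpha : nat -> mindex n).
Hypotheses (K_compact : compact K) (K_neq0 : K !=set0).

Lemma tcheb_le_supnorm i c : tcheb K alpha i <= supnorm K (Ppoly alpha i c).
Proof.
apply: ge_inf; last by exists c.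
by exists 0 => _ [c' _ <-]; apply: supnorm_ge0 => //; exact: bounded_on_Ppoly.
Qed.

Lemma tcheb_ge0 i : 0 <= tcheb K alpha i.
Proof.
apply: lb_le_inf; first by exists (supnorm K (Ppoly alpha i (fun=> 0))), (fun=> 0).
by move=> _ [c' _ <-]; apply: supnorm_ge0 => //; exact: bounded_on_Ppoly.
Qed.

End SupNorm.

Lemma limn_inf_ge0_le_frequently (R : realType) (u : R^nat) x :
  (forall m, 0 <= u m) -> (forall N, exists2 j, (N <= j)%N & u j <= x) ->
  0 <= limn_inf u /\ limn_inf u <= x.
Proof.
move=> u_ge0 often_le.
have infs_le N : infs u N <= x.
  have [j Nj ujx] := often_le N.
  apply: le_trans ujx; apply: ge_inf; last by exists j.
  by exists 0 => _ [m _ <-].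
have infs_ge0 N : 0 <= infs u N.
  by apply: lb_le_inf; [exists (u N), N => /=|move=> _ [m _ <-]].
have nd : nondecreasing_seq (infs u).
  by apply: nondecreasing_infs; exists 0 => _ [m _ <-].
have cv : cvgn (infs u) by apply: nondecreasing_is_cvgn nd _; exists x => _ [m _ <-].
by split; [apply: limr_ge cv _|apply: limr_le cv _]; exact: nearW.
Qed.

Section NonPluripolar.
Variables (R : realType) (n : nat).
Local Notation CN := ({ptws 'I_n -> (R * R)%type}).

Definition scale_point (z : CN) (t : R) : CN := fun k => (t * (z k).1, t * (z k).2).

Lemma scale_point_continuous (z : CN) : continuous (scale_point z).
Proof.
move=> t; apply/cvg_sup => k.
have coord_cont : continuous ((@^~ k) \o scale_point z).
  move=> s; apply: (@cvg_pair _ _ _ (nbhs s) (nbhs (s * (z k).1)) (nbhs (s * (z k).2)));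
    by apply: cvgMl; exact: cvg_id.
exact: (@continuous_comp_initial _ _ _ (@^~ k) (scale_point z) coord_cont t).
Qed.

(* C^n is star-shaped about 0. *)
Lemma connected_setT_Cn : connected [set: CN].
Proof.
have -> : [set: CN] = \bigcup_(z in setT) (scale_point z @` `[0, 1]).
  apply/seteqP; split => // z _; exists z => //; exists 1.
    by rewrite /= in_itv /= lexx ler01.
  by apply: funext => k; rewrite /scale_point !mul1r; case: (z k).
apply: bigcup_connected.
  exists (fun _ => (0, 0)) => z _; exists 0; first by rewrite /= in_itv /= lexx ler01.
  by apply: funext => k; rewrite /scale_point !mul0r.
move=> z _; apply: connected_continuous_connected; first exact: segment_connected.
exact/continuous_subspaceT/scale_point_continuous.
Qed.

(* The empty set is pluripolar, witnessed by u = 0 on all of C^n. *)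
Lemma nonpluripolar_neq0 (K : set CN) : ~ pluripolar K -> K !=set0.
Proof.
move=> npp; apply: contrapT => K0; apply: npp.
exists setT, (fun _ => 0%E); split.
  split=> //; [exact: openT|exact: connected_setT_Cn|split].
  - by move=> z _; exact: ltry.
  - by move=> a _ c c0; apply: filterS filterT.
  - by move=> a b _; rewrite integral0 mule0.
split; first by exists (fun _ => (0, 0)).
by move=> z Kz; case: K0; exists z.
Qed.

End NonPluripolar.

Section Chebyshev.
Variables (R : realType) (n : nat) (K : set {ptws 'I_n -> (R * R)%type})
  (alpha : nat -> mindex n).
Hypotheses (alpha_enum : glex_enum alpha) (K_compact : compact K) (K_neq0 : K !=set0).

Lemma frequently_tcheb_root_le i (c : nat -> R[i]) : (0 < mdeg (alpha i))%N ->
  forall N, exists2 j, (N <= j)%N &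
    tcheb K alpha j `^ (mdeg (alpha j))%:R^-1 <=
    supnorm K (Ppoly alpha i c) `^ (mdeg (alpha i))%:R^-1.
Proof.
set d := mdeg (alpha i); set s := supnorm K (Ppoly alpha i c) => d_gt0 N.
have s_ge0 : 0 <= s by apply: supnorm_ge0 => //; exact: bounded_on_Ppoly.
(* any k > |alpha(N)| makes |k alpha(i)| > |alpha(N)|, forcing its index past N *)
set k := (mdeg (alpha N)).+1.
have [j ajk] := glex_enum_surj alpha_enum (mscale k (alpha i)).
have dj : mdeg (alpha j) = (k * d)%N by rewrite ajk mdeg_mscale.
exists j.
  rewrite leqNgt; apply/negP => /(proj2 alpha_enum) /glex_lt_mdeg.
  by rewrite dj => /(leq_trans (leq_pmulr k d_gt0)); rewrite ltnn.
have [c' Pk] := Ppoly_expn alpha_enum c ajk.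
have tj_le : tcheb K alpha j <= s ^+ k.
  apply: le_trans (tcheb_le_supnorm alpha K_compact K_neq0 j c') _.
  rewrite -Pk; apply: supnorm_le => // z Kz.
  rewrite cmodX lerXn2r ?nnegrE ?cmod_ge0 //.
  by apply: cmod_le_supnorm => //; exact: bounded_on_Ppoly.
have tj_ge0 := tcheb_ge0 alpha K_compact K_neq0 j.
rewrite dj; apply: le_trans (ge0_ler_powR _ _ _ tj_le) _;
  rewrite ?nnegrE ?invr_ge0 ?exprn_ge0 //.
rewrite -powR_mulrn // -powRrM natrM invfM mulrA divff ?mul1r //.
by rewrite pnatr_eq0 -lt0n.
Qed.

Lemma tau_minus_expn_le_supnorm i (c : nat -> R[i]) :
  tau_minus K alpha ^+ mdeg (alpha i) <= supnorm K (Ppoly alpha i c).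
Proof.
have [d0|d_gt0] := posnP (mdeg (alpha i)).
  rewrite d0 expr0; have i0 := glex_enum_mdeg0 alpha_enum d0; subst i.
  have [z Kz] := K_neq0.
  apply: le_trans (cmod_le_supnorm (bounded_on_Ppoly _ _ _ K_compact) Kz).
  rewrite /Ppoly big_ord0 addr0 /monomial big1 ?cmod1 // => k _.
  by have := leq_coord_mdeg (alpha 0%N) k; rewrite d0 leqn0 => /eqP ->.
have root_ge0 m : 0 <= tcheb K alpha m `^ (mdeg (alpha m))%:R^-1 by exact: powR_ge0.
have [tau_ge0 tau_le] :=
  limn_inf_ge0_le_frequently root_ge0 (frequently_tcheb_root_le c d_gt0).
apply: le_trans (lerXn2r _ _ _ tau_le) _; rewrite ?nnegrE ?powR_ge0 //.
rewrite -powR_mulrn ?powR_ge0 // -powRrM mulVf ?powRr1 //.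
  by apply: supnorm_ge0 => //; exact: bounded_on_Ppoly.
by rewrite pnatr_eq0 -lt0n.
Qed.

End Chebyshev.

Theorem theorem2p1 (R : realType) (n : nat) (K : set (Cn R n))
    (alpha : nat -> mindex n) :
  glex_enum alpha -> compact K -> ~ pluripolar K ->
  forall i : nat,
    tau_minus K alpha ^+ mdeg (alpha i) <= tcheb K alpha i /\
    (forall c : nat -> R[i],
       (forall c' : nat -> R[i],
          supnorm K (Ppoly alpha i c) <= supnorm K (Ppoly alpha i c')) ->
       tau_minus K alpha ^+ mdeg (alpha i) <= supnorm K (Ppoly alpha i c)).
Proof.
move=> alpha_enum K_compact npp i.
have K_neq0 := nonpluripolar_neq0 npp.
have tau_le c := tau_minus_expn_le_supnorm alpha_enum K_compact K_neq0 i c.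
split=> [|c _]; last exact: tau_le.
apply: lb_le_inf; first by exists (supnorm K (Ppoly alpha i (fun=> 0))), (fun=> 0).
by move=> _ [c _ <-]; exact: tau_le.
Qed.
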